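(* Let $F$ be a uniform set-system. The following are equivalent: (1) $F$ is an HKE set-system; (2) for every two non-empty disjoint subfamilies $\Gamma_1,\Gamma_2\subseteq F$, $$\Big|\bigcap\Gamma_1-\bigcup\Gamma_2\Big|=\Big|\bigcap\Gamma_2-\bigcup\Gamma_1\Big|;$$ (3) the equality in (2) holds for every two non-empty disjoint subfamilies $\Gamma_1,\Gamma_2\subseteq F$ with $\Gamma_1\cup\Gamma_2=F$.
   Context: A set-system is a family of sets; throughout, set-systems are non-empty finite families of finite non-empty sets. A set-system $F$ is uniform if all its members have the same cardinality, denoted $\alpha(F)$. A set-system $F$ is a hereditary König–Egerváry (HKE) set-system if there is a positive integer $\alpha$ such that $|\bigcup\Gamma|+|\bigcap\Gamma|=2\alpha$ for every non-empty subfamily $\Gamma\subseteq F$. Here $X-Y$ denotes set difference. *)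

From mathcomp Require Import all_boot.
Set Implicit Arguments. Unset Strict Implicit. Unset Printing Implicit Defensive.

Definition set_system (T : finType) (F : {set {set T}}) : Prop :=
  F != set0 /\ set0 \notin F.

Definition uniform (T : finType) (F : {set {set T}}) : Prop :=
  exists k, forall A, A \in F -> #|A| = k.

Definition bigU (T : finType) (G : {set {set T}}) : {set T} := \bigcup_(A in G) A.
Definition bigI (T : finType) (G : {set {set T}}) : {set T} := \bigcap_(A in G) A.

Definition HKE (T : finType) (F : {set {set T}}) : Prop :=
  exists alpha, 0 < alpha /\
    forall G : {set {set T}}, G \subset F -> G != set0 ->
      #|bigU G| + #|bigI G| = 2 * alpha.

Definition cond2 (T : finType) (F : {set {set T}}) : Prop :=
  forall G1 G2 : {set {set T}}, G1 \subset F -> G2 \subset F ->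
    G1 != set0 -> G2 != set0 -> [disjoint G1 & G2] ->
    #|bigI G1 :\: bigU G2| = #|bigI G2 :\: bigU G1|.

Definition cond3 (T : finType) (F : {set {set T}}) : Prop :=
  forall G1 G2 : {set {set T}}, G1 \subset F -> G2 \subset F ->
    G1 != set0 -> G2 != set0 -> [disjoint G1 & G2] -> G1 :|: G2 = F ->
    #|bigI G1 :\: bigU G2| = #|bigI G2 :\: bigU G1|.

(** Write [excl P Q] for the number of points lying in every member of [P]
    and in no member of [Q].  Adding a set [A] to a family [G] changes
    [#|bigU G| + #|bigI G|] by exactly [excl [set A] G - excl G [set A]], so
    the HKE condition holds iff [excl] is symmetric whenever one of the two
    families is a singleton.  Conversely, splitting on membership in a further
    set [A] gives [excl P Q = excl P (A |: Q) + excl (A |: P) Q]; by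
    induction this extends symmetry from singletons [P] to arbitrary [P], and
    from pairs covering [F] to arbitrary disjoint pairs. *)

From mathcomp Require Import all_boot zify.
Set Implicit Arguments.
Unset Strict Implicit.
Unset Printing Implicit Defensive.

Section Families.
Variable T : finType.
Implicit Types (A : {set T}) (F G P Q : {set {set T}}).

Lemma bigU_set1 A : bigU [set A] = A.
Proof. by rewrite /bigU big_set1. Qed.

Lemma bigI_set1 A : bigI [set A] = A.
Proof. by rewrite /bigI big_set1. Qed.

Lemma bigU_setU1 A G : bigU (A |: G) = A :|: bigU G.
Proof. by rewrite /bigU bigcup_setU big_set1. Qed.

Lemma bigI_setU1 A G : bigI (A |: G) = A :&: bigI G.
Proof. by rewrite /bigI bigcap_setU big_set1. Qed.

Definition excl P Q := #|bigI P :\: bigU Q|.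

Lemma excl_setU1 A P Q : excl P Q = excl P (A |: Q) + excl (A |: P) Q.
Proof.
rewrite /excl bigU_setU1 bigI_setU1 -(cardsID A (bigI P :\: bigU Q)) addnC.
by congr (_ + _); apply: eq_card => x; rewrite !inE;
  case: (x \in A); case: (x \in bigI P); case: (x \in bigU Q).
Qed.

Lemma card_bigUI_setU1 A G :
  #|bigU (A |: G)| + #|bigI (A |: G)| + excl G [set A] =
  #|bigU G| + #|bigI G| + excl [set A] G.
Proof.
rewrite /excl bigU_setU1 bigI_setU1 bigU_set1 bigI_set1.
have -> : #|A :|: bigU G| = #|bigU G| + #|A :\: bigU G|.
  rewrite -(cardsID (bigU G) (A :|: bigU G)).
  by congr (_ + _); apply: eq_card => x; rewrite !inE;
    case: (x \in A); case: (x \in bigU G).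
by rewrite -addnA (setIC A) cardsID; lia.
Qed.

Lemma disjoint_setU1r A P Q :
  [disjoint P & A |: Q] = (A \notin P) && [disjoint P & Q].
Proof.
rewrite !disjoints_subset setCU subsetI -disjoints_subset.
by rewrite disjoint_sym disjoints1.
Qed.

Variable F : {set {set T}}.

Definition excl_sym_singletons :=
  forall A Q, A \in F -> Q \subset F -> Q != set0 -> A \notin Q ->
    excl [set A] Q = excl Q [set A].

Lemma HKE_excl_sym_singletons : HKE F -> excl_sym_singletons.
Proof.
case=> alpha [_ hke] A Q AF sQF Q0 _.
have sAQF : A |: Q \subset F by rewrite subUset sub1set AF.
have AQ0 : A |: Q != set0 by apply/set0Pn; exists A; rewrite setU11.
have := card_bigUI_setU1 A Q.
by rewrite (hke _ sAQF AQ0) (hke _ sQF Q0) => /addnI ->.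
Qed.

Lemma excl_sym_singletons_cond2 : excl_sym_singletons -> cond2 F.
Proof.
move=> sym1 P Q sPF sQF P0 Q0 dPQ; rewrite -/(excl P Q) -/(excl Q P).
have [n ltPn] := ubnP #|P|; elim: n => // n IH in P Q sPF sQF P0 Q0 dPQ ltPn *.
case/set0Pn: (P0) => A AP.
have AF : A \in F by apply: (subsetP sPF).
have AQ : A \notin Q by rewrite (disjointFr dPQ AP).
have [P'0 | P'0] := eqVneq (P :\ A) set0.
  have -> : P = [set A].
    by apply/eqP; rewrite eqEsubset sub1set AP andbT -setD_eq0 P'0.
  exact: sym1.
set P' := P :\ A; have defP : A |: P' = P by rewrite setD1K.
have sP'F : P' \subset F by rewrite (subset_trans (subsetDl _ _)).
have AP' : A \notin P' by rewrite !inE eqxx.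
have dP'Q : [disjoint P' & Q] by rewrite (disjointWl (subsetDl _ _)).
have ltP'n : #|P'| < n by move: ltPn; rewrite (cardsD1 A P) AP.
have IH1 := IH P' Q sP'F sQF P'0 Q0 dP'Q ltP'n.
have IH2 : excl P' (A |: Q) = excl (A |: Q) P'.
  apply: IH => //; first by rewrite subUset sub1set AF.
  - by apply/set0Pn; exists A; rewrite setU11.
  - by rewrite disjoint_setU1r AP'.
have := excl_setU1 A P' Q; have := excl_setU1 A Q P'.
by rewrite defP IH1 IH2 => -> /eqP; rewrite addnC eqn_add2l => /eqP ->.
Qed.

Lemma cond2_card_bigUI k :
  cond2 F -> (forall A, A \in F -> #|A| = k) ->
  forall G, G \subset F -> G != set0 -> #|bigU G| + #|bigI G| = 2 * k.
Proof.
move=> c2 hk G sGF G0.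
have [n ltGn] := ubnP #|G|; elim: n => // n IH in G sGF G0 ltGn *.
case/set0Pn: (G0) => A AG.
have AF : A \in F by apply: (subsetP sGF).
have [G'0 | G'0] := eqVneq (G :\ A) set0.
  have -> : G = [set A].
    by apply/eqP; rewrite eqEsubset sub1set AG andbT -setD_eq0 G'0.
  by rewrite bigU_set1 bigI_set1 hk // addnn mul2n.
set G' := G :\ A; have defG : A |: G' = G by rewrite setD1K.
have sG'F : G' \subset F by rewrite (subset_trans (subsetDl _ _)).
have ltG'n : #|G'| < n by move: ltGn; rewrite (cardsD1 A G) AG.
have sym : excl [set A] G' = excl G' [set A].
  apply: c2 => //; first by rewrite sub1set.
  - by apply/set0Pn; exists A; rewrite set11.
  - by rewrite disjoints1 !inE eqxx.
have := card_bigUI_setU1 A G'.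
by rewrite defG sym (IH G') // => /addIn.
Qed.

Lemma cond3_cond2 : cond3 F -> cond2 F.
Proof.
move=> c3 P Q sPF sQF P0 Q0 dPQ; rewrite -/(excl P Q) -/(excl Q P).
have [n ltn] := ubnP #|F :\: (P :|: Q)|.
elim: n => // n IH in P Q sPF sQF P0 Q0 dPQ ltn *.
have sPQF : P :|: Q \subset F by rewrite subUset sPF.
have [coverF | ] := eqVneq (P :|: Q) F; first exact: c3.
rewrite eqEsubset sPQF /= => /subsetPn[A AF].
rewrite inE negb_or => /andP[AP AQ].
have sAF (X : {set {set T}}) : X \subset F -> A |: X \subset F.
  by rewrite subUset sub1set AF.
have AX0 (X : {set {set T}}) : A |: X != set0.
  by apply/set0Pn; exists A; rewrite setU11.
have ltA (X Y : {set {set T}}) :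
    X :|: Y = A |: (P :|: Q) -> #|F :\: (X :|: Y)| < n.
  move=> ->; rewrite setUC -setDDl.
  move: ltn; rewrite (cardsD1 A (F :\: (P :|: Q))).
  by rewrite !inE AF (negbTE AP) (negbTE AQ).
have IH1 : excl P (A |: Q) = excl (A |: Q) P.
  apply: IH => //; first exact: sAF.
  - by rewrite disjoint_setU1r AP.
  - by apply: ltA; rewrite setUCA.
have IH2 : excl (A |: P) Q = excl Q (A |: P).
  apply: IH => //; first exact: sAF.
  - by rewrite disjoint_sym disjoint_setU1r AQ disjoint_sym.
  - by apply: ltA; rewrite setUA.
by rewrite (excl_setU1 A P Q) (excl_setU1 A Q P) IH1 IH2 addnC.
Qed.

End Families.

Theorem proposition2p2 (T : finType) (F : {set {set T}})
  (hF : set_system F) (hU : uniform F) :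
  (HKE F <-> cond2 F) /\ (cond2 F <-> cond3 F).
Proof.
case: hF => F0 F_set0; case: hU => k hk.
split; split.
- by move=> hke; apply/excl_sym_singletons_cond2/HKE_excl_sym_singletons.
- move=> c2; exists k; split; last exact: cond2_card_bigUI.
  case/set0Pn: F0 => A AF; rewrite -(hk A AF) lt0n cards_eq0.
  by apply: contraNneq F_set0 => <-.
- by move=> c2 P Q *; apply: c2.
- exact: cond3_cond2.
Qed.
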